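(* Let $G_1,G_2,H_1,H_2\in SL^+_{sym}(2)$. Then $$K^{min}=\sqrt{\lambda_{\max}\big(G_1^{-1/2}G_2G_1^{-1/2}\big)\ \lambda_{\max}\big(H_1^{-1/2}H_2H_1^{-1/2}\big)}.$$
   Context: $SL^+_{sym}(2)$: real symmetric positive definite $2\times2$ matrices with determinant $1$; $SL(2)$: real $2\times2$ matrices of determinant $1$; $\lambda_{\max}(M)$: largest eigenvalue of a symmetric $M$; $M^{-1/2}$ is the positive definite square root of $M^{-1}$. For $G_1,G_2,H_1,H_2\in SL^+_{sym}(2)$ define $$K^{min}:=\min_{A,B\in SL(2)}\ \max_{i=1,2}\ \lambda_{\max}(B^TG_iB)\,\lambda_{\max}(A^TH_iA).$$ *)

From Stdlib Require Import Reals Lra ClassicalEpsilon.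
Open Scope R_scope.

Record M2 := mkM2 { m11 : R; m12 : R; m21 : R; m22 : R }.

Definition Id2 : M2 := mkM2 1 0 0 1.

Definition mmul (A B : M2) : M2 :=
  mkM2 (m11 A * m11 B + m12 A * m21 B) (m11 A * m12 B + m12 A * m22 B)
       (m21 A * m11 B + m22 A * m21 B) (m21 A * m12 B + m22 A * m22 B).

Definition mtr (A : M2) : M2 := mkM2 (m11 A) (m21 A) (m12 A) (m22 A).

Definition det2 (A : M2) : R := m11 A * m22 A - m12 A * m21 A.

Definition minv (A : M2) : M2 :=
  mkM2 (m22 A / det2 A) (- m12 A / det2 A) (- m21 A / det2 A) (m11 A / det2 A).

Definition is_sym (A : M2) : Prop := m12 A = m21 A.

Definition posdef (A : M2) : Prop :=
  forall x y : R, (x <> 0 \/ y <> 0) ->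
    0 < x * (m11 A * x + m12 A * y) + y * (m21 A * x + m22 A * y).

Definition SLsymp (A : M2) : Prop := is_sym A /\ posdef A /\ det2 A = 1.

Definition SL2 (A : M2) : Prop := det2 A = 1.

Definition eigenvalue (A : M2) (l : R) : Prop :=
  exists x y : R, (x <> 0 \/ y <> 0) /\
    m11 A * x + m12 A * y = l * x /\ m21 A * x + m22 A * y = l * y.

Definition is_lambda_max (A : M2) (l : R) : Prop :=
  eigenvalue A l /\ forall m, eigenvalue A m -> m <= l.

(* largest eigenvalue (well defined for symmetric A) *)
Definition lambda_max (A : M2) : R :=
  epsilon (inhabits 0) (is_lambda_max A).

Definition minv_sqrt (A : M2) : M2 :=
  epsilon (inhabits Id2) (fun S => is_sym S /\ posdef S /\ mmul S S = minv A).

Definition Kobj (G1 G2 H1 H2 A B : M2) : R :=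
  Rmax (lambda_max (mmul (mtr B) (mmul G1 B)) * lambda_max (mmul (mtr A) (mmul H1 A)))
       (lambda_max (mmul (mtr B) (mmul G2 B)) * lambda_max (mmul (mtr A) (mmul H2 A))).

Definition is_Kmin (G1 G2 H1 H2 : M2) (v : R) : Prop :=
  (exists A B, SL2 A /\ SL2 B /\ Kobj G1 G2 H1 H2 A B = v) /\
  (forall A B, SL2 A -> SL2 B -> v <= Kobj G1 G2 H1 H2 A B).

From Stdlib Require Import Reals Lra Psatz ClassicalEpsilon.
Open Scope R_scope.

(* The objective splits into a G-part depending on B and an H-part depending
   on A, so everything reduces to one pair (G1, G2) of matrices in SL^+_sym(2):
   - lower bound: for B in SL(2), mu <= lambda_max(B^T G1 B) lambda_max(B^T G2 B).
     Take a top eigenvector v of N = G1^{-1/2} G2 G1^{-1/2} and u = B^{-1} G1^{-1/2} v;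
     then u^T (B^T G2 B) u = mu u^T (B^T G1 B) u, and the Rayleigh bounds for the
     det-1 matrix B^T G1 B (whose smallest eigenvalue is 1/lambda_max) give the claim;
   - attainment: B = G1^{-1/2} R D, with R a rotation diagonalizing N to
     diag(mu, 1/mu) and D = diag(mu^{-1/4}, mu^{1/4}), makes both factors sqrt mu.
   Multiplying the two lower bounds gives sqrt(mu nu) <= max of the two products. *)

Definition lmax2 (M : M2) : R :=
  (m11 M + m22 M) / 2 + sqrt (((m11 M - m22 M) / 2) ^ 2 + m12 M ^ 2).

Definition lmin2 (M : M2) : R := m11 M + m22 M - lmax2 M.

Definition qf (M : M2) (x y : R) : R :=
  x * (m11 M * x + m12 M * y) + y * (m21 M * x + m22 M * y).

(* lmax2 dominates both diagonal entries, and the gaps multiply to b^2: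
   this is the characteristic equation (L - a)(L - d) = b^2. *)
Lemma lmax2_gaps a b c d :
  0 <= lmax2 (mkM2 a b c d) - a /\ 0 <= lmax2 (mkM2 a b c d) - d /\
  (lmax2 (mkM2 a b c d) - a) * (lmax2 (mkM2 a b c d) - d) = b * b.
Proof.
  unfold lmax2; cbn [m11 m12 m21 m22].
  set (r := sqrt (((a - d) / 2) ^ 2 + b ^ 2)).
  assert (r_nonneg : 0 <= r) by (unfold r; apply sqrt_pos).
  assert (r_sq : r * r = ((a - d) / 2) ^ 2 + b ^ 2).
  { unfold r; apply sqrt_sqrt.
    pose proof (pow2_ge_0 ((a - d) / 2)); pose proof (pow2_ge_0 b); lra. }
  repeat split; nra.
Qed.

Lemma eigenvalue_le_lmax2 M m : is_sym M -> eigenvalue M m -> m <= lmax2 M.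
Proof.
  destruct M as [a b c d]; unfold is_sym, eigenvalue; simpl; intros <-.
  intros [x [y [Hxy [E1 E2]]]].
  (* eliminating the eigenvector gives the characteristic equation *)
  assert (Ex : ((a - m) * (d - m) - b * b) * x = 0).
  { transitivity ((d - m) * ((a * x + b * y) - m * x) - b * ((b * x + d * y) - m * y));
      [ring | rewrite E1, E2; ring]. }
  assert (Ey : ((a - m) * (d - m) - b * b) * y = 0).
  { transitivity ((a - m) * ((b * x + d * y) - m * y) - b * ((a * x + b * y) - m * x));
      [ring | rewrite E1, E2; ring]. }
  assert (char_eq : (a - m) * (d - m) - b * b = 0).
  { destruct Hxy as [Hx | Hy]; apply Rmult_integral in Ex; apply Rmult_integral in Ey;
      tauto. }
  unfold lmax2; cbn [m11 m12 m21 m22].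
  set (r := sqrt (((a - d) / 2) ^ 2 + b ^ 2)).
  assert (r_nonneg : 0 <= r) by (unfold r; apply sqrt_pos).
  assert (r_sq : r * r = ((a - d) / 2) ^ 2 + b ^ 2).
  { unfold r; apply sqrt_sqrt.
    pose proof (pow2_ge_0 ((a - d) / 2)); pose proof (pow2_ge_0 b); lra. }
  nra.
Qed.

Lemma lmax2_eigenvalue M : is_sym M -> eigenvalue M (lmax2 M).
Proof.
  destruct M as [a b c d]; unfold is_sym, eigenvalue; simpl; intros <-.
  destruct (lmax2_gaps a b b d) as [_ [_ Hchar]].
  set (L := lmax2 (mkM2 a b b d)) in *.
  destruct (Req_dec b 0) as [Hb | Hb]; [destruct (Req_dec (L - a) 0) as [Ha | Ha] |].
  - exists 1, 0; split; [left; lra | subst b; split; lra].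
  - exists b, (L - a); split; [right; exact Ha | split; nra].
  - exists b, (L - a); split; [left; exact Hb | split; nra].
Qed.

Lemma lambda_max_sym M : is_sym M -> lambda_max M = lmax2 M.
Proof.
  intros Hsym.
  assert (Hspec : is_lambda_max M (lmax2 M)).
  { split; [apply lmax2_eigenvalue | intros m; apply eigenvalue_le_lmax2]; auto. }
  destruct (epsilon_spec (inhabits 0) (is_lambda_max M) (ex_intro _ _ Hspec))
    as [Heig Hmax].
  destruct Hspec as [Heig' Hmax'].
  apply Rle_antisym; auto.
Qed.

Lemma form_nonneg p q b x y : 0 <= p -> 0 <= q -> p * q = b * b ->
  0 <= p * x * x - 2 * b * x * y + q * y * y.
Proof.
  intros Hp Hq Hpq. destruct Hp as [Hp | <-].
  - assert (Hsq : p * (p * x * x - 2 * b * x * y + q * y * y)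
                  = (p * x - b * y) * (p * x - b * y) + (p * q - b * b) * y * y)
      by ring.
    rewrite Hpq, Rminus_diag, !Rmult_0_l, Rplus_0_r in Hsq.
    apply (Rmult_le_reg_l p); [exact Hp |].
    rewrite Rmult_0_r, Hsq. apply Rle_0_sqr.
  - assert (b = 0) by nra. subst b. nra.
Qed.

Lemma qf_le_lmax2 M x y : is_sym M -> qf M x y <= lmax2 M * (x * x + y * y).
Proof.
  destruct M as [a b c d]; unfold is_sym, qf; simpl; intros <-.
  destruct (lmax2_gaps a b b d) as [Ha [Hd Hchar]].
  pose proof (form_nonneg _ _ b x y Ha Hd Hchar). lra.
Qed.

Lemma lmin2_le_qf M x y : is_sym M -> lmin2 M * (x * x + y * y) <= qf M x y.
Proof.
  destruct M as [a b c d]; unfold is_sym, lmin2, qf; simpl; intros <-.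
  destruct (lmax2_gaps a b b d) as [Ha [Hd Hchar]].
  assert (Hchar' : (lmax2 (mkM2 a b b d) - d) * (lmax2 (mkM2 a b b d) - a)
                   = (- b) * (- b)) by lra.
  pose proof (form_nonneg _ _ (- b) x y Hd Ha Hchar'). lra.
Qed.

Lemma lmin2_mul_lmax2 M : is_sym M -> lmin2 M * lmax2 M = det2 M.
Proof.
  destruct M as [a b c d]; unfold is_sym, lmin2, det2; simpl; intros <-.
  destruct (lmax2_gaps a b b d) as [_ [_ Hchar]]. lra.
Qed.

Lemma lmin2_le_lmax2 M : is_sym M -> lmin2 M <= lmax2 M.
Proof.
  destruct M as [a b c d]; unfold is_sym, lmin2; simpl; intros <-.
  destruct (lmax2_gaps a b b d) as [Ha [Hd _]]. lra.
Qed.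

Lemma lambda_max_diag x y : lambda_max (mkM2 x 0 0 y) = Rmax x y.
Proof.
  rewrite lambda_max_sym by reflexivity. unfold lmax2; cbn [m11 m12 m21 m22].
  replace (((x - y) / 2) ^ 2 + 0 ^ 2) with (Rsqr ((x - y) / 2))
    by (unfold Rsqr; ring).
  rewrite sqrt_Rsqr_abs. unfold Rmax, Rabs.
  destruct (Rle_dec x y); destruct (Rcase_abs ((x - y) / 2)); lra.
Qed.

Definition congr (X G : M2) : M2 := mmul (mtr X) (mmul G X).

Lemma congr_comp X Y G : congr (mmul X Y) G = congr Y (congr X G).
Proof. destruct X, Y, G; unfold congr, mmul, mtr; simpl; f_equal; ring. Qed.

Lemma det_mmul X Y : det2 (mmul X Y) = det2 X * det2 Y.
Proof. destruct X, Y; unfold det2, mmul; simpl; ring. Qed.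

Lemma det_congr X G : det2 (congr X G) = det2 X * det2 G * det2 X.
Proof. unfold congr; rewrite !det_mmul; destruct X; unfold det2, mtr; simpl; ring. Qed.

Lemma congr_sym X G : is_sym G -> is_sym (congr X G).
Proof. destruct X, G; unfold is_sym, congr, mmul, mtr; simpl; intros ->; ring. Qed.

Lemma mtr_sym S : is_sym S -> mtr S = S.
Proof. destruct S; unfold is_sym, mtr; simpl; intros ->; reflexivity. Qed.

Lemma qf_congr X G x y :
  qf (congr X G) x y = qf G (m11 X * x + m12 X * y) (m21 X * x + m22 X * y).
Proof. destruct X, G; unfold qf, congr, mmul, mtr; simpl; ring. Qed.

(* For det X = 1, the vector adj(X) w is mapped by X back to w. *)
Lemma qf_congr_adj X G w1 w2 : det2 X = 1 ->
  qf (congr X G) (m22 X * w1 - m12 X * w2) (- m21 X * w1 + m11 X * w2) = qf G w1 w2.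
Proof.
  intros HX. rewrite qf_congr.
  replace (m11 X * (m22 X * w1 - m12 X * w2) + m12 X * (- m21 X * w1 + m11 X * w2))
    with (det2 X * w1) by (unfold det2; ring).
  replace (m21 X * (m22 X * w1 - m12 X * w2) + m22 X * (- m21 X * w1 + m11 X * w2))
    with (det2 X * w2) by (unfold det2; ring).
  rewrite HX, !Rmult_1_l. reflexivity.
Qed.

Lemma qf_eigenvector M l x y :
  m11 M * x + m12 M * y = l * x -> m21 M * x + m22 M * y = l * y ->
  qf M x y = l * (x * x + y * y).
Proof. unfold qf; intros -> ->; ring. Qed.

Lemma sum_sq_pos x y : x <> 0 \/ y <> 0 -> 0 < x * x + y * y.
Proof. intros [H | H]; pose proof (Rsqr_pos_lt _ H); unfold Rsqr in *; nra. Qed.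

Lemma posdef_congr X G : det2 X <> 0 -> posdef G -> posdef (congr X G).
Proof.
  intros HX HG x y Hxy. fold (qf (congr X G) x y). rewrite qf_congr.
  apply HG.
  destruct (Req_dec (m11 X * x + m12 X * y) 0) as [E1 | E1]; [| left; exact E1].
  destruct (Req_dec (m21 X * x + m22 X * y) 0) as [E2 | E2]; [| right; exact E2].
  exfalso. unfold det2 in HX.
  assert (Ex : (m11 X * m22 X - m12 X * m21 X) * x = 0).
  { transitivity (m22 X * (m11 X * x + m12 X * y) - m12 X * (m21 X * x + m22 X * y));
      [ring | rewrite E1, E2; ring]. }
  assert (Ey : (m11 X * m22 X - m12 X * m21 X) * y = 0).
  { transitivity (m11 X * (m21 X * x + m22 X * y) - m21 X * (m11 X * x + m12 X * y));
      [ring | rewrite E1, E2; ring]. }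
  apply Rmult_integral in Ex; apply Rmult_integral in Ey. tauto.
Qed.

Lemma posdef_of_minors p q r : 0 < p -> 0 < p * r - q * q -> posdef (mkM2 p q q r).
Proof.
  intros Hp Hd x y Hxy. simpl.
  assert (Hsq : p * (x * (p * x + q * y) + y * (q * x + r * y))
                = (p * x + q * y) * (p * x + q * y) + (p * r - q * q) * (y * y)) by ring.
  apply (Rmult_lt_reg_l p); [exact Hp |]. rewrite Rmult_0_r, Hsq.
  destruct (Req_dec y 0) as [-> | Hy].
  - destruct Hxy as [Hx | []]; [| reflexivity].
    replace ((p * x + q * 0) * (p * x + q * 0) + (p * r - q * q) * (0 * 0))
      with (Rsqr (p * x)) by (unfold Rsqr; ring).
    apply Rsqr_pos_lt, Rmult_integral_contrapositive_currified; lra.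
  - pose proof (Rle_0_sqr (p * x + q * y)) as Hfirst.
    pose proof (Rmult_lt_0_compat _ _ Hd (Rsqr_pos_lt _ Hy)) as Hsecond.
    unfold Rsqr in *. lra.
Qed.

Lemma posdef_diag M : posdef M -> 0 < m11 M /\ 0 < m22 M.
Proof.
  intros H. split.
  - specialize (H 1 0 (or_introl R1_neq_R0)). lra.
  - specialize (H 0 1 (or_intror R1_neq_R0)). lra.
Qed.

Lemma posdef_det M : is_sym M -> posdef M -> 0 < det2 M.
Proof.
  intros Hsym Hpd. destruct (posdef_diag M Hpd) as [Ha _].
  destruct M as [a b c d]; unfold is_sym, det2 in *; simpl in *; subst c.
  specialize (Hpd (- b) a (or_intror (Rgt_not_eq _ _ Ha))). simpl in Hpd.
  replace (- b * (a * - b + b * a) + a * (b * - b + d * a)) with (a * (a * d - b * b))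
    in Hpd by ring.
  apply (Rmult_lt_reg_l a); lra.
Qed.

Lemma lambda_max_pos M : is_sym M -> posdef M -> 0 < lambda_max M.
Proof.
  intros Hsym Hpd. rewrite lambda_max_sym by exact Hsym.
  destruct (posdef_diag M Hpd) as [Ha _].
  destruct M as [a b c d]; destruct (lmax2_gaps a b c d) as [Hgap _]. simpl in Ha. lra.
Qed.

Lemma lambda_max_ge1 M : is_sym M -> posdef M -> det2 M = 1 -> 1 <= lambda_max M.
Proof.
  intros Hsym Hpd Hdet. pose proof (lambda_max_pos M Hsym Hpd) as Hpos.
  rewrite lambda_max_sym in * by exact Hsym.
  pose proof (lmin2_mul_lmax2 M Hsym). pose proof (lmin2_le_lmax2 M Hsym). nra.
Qed.

Lemma minv_det1 G : det2 G = 1 -> minv G = mkM2 (m22 G) (- m12 G) (- m21 G) (m11 G).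
Proof. intros H. unfold minv. rewrite H. f_equal; field. Qed.

(* Explicit square root of G^{-1} = adj G for G in SL^+_sym(2):
   (adj G + I) / sqrt(tr G + 2), by Cayley-Hamilton. *)
Lemma inv_sqrt_exists G : SLsymp G -> exists S, is_sym S /\ posdef S /\ mmul S S = minv G.
Proof.
  intros [Hsym [Hpd Hdet]]. destruct (posdef_diag G Hpd) as [Ha Hd].
  rewrite (minv_det1 G Hdet).
  destruct G as [a b c d]; unfold is_sym, det2 in *; simpl in *; subst c.
  set (t := a + d + 2).
  set (k := / sqrt t).
  assert (k_sq : k * k * t = 1).
  { unfold k. rewrite <- Rinv_mult, (sqrt_sqrt t) by (unfold t; lra). field. unfold t; lra. }
  assert (k_pos : 0 < k) by (unfold k; apply Rinv_0_lt_compat, sqrt_lt_R0; unfold t; lra).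
  exists (mkM2 ((d + 1) * k) (- b * k) (- b * k) ((a + 1) * k)).
  split; [reflexivity | split].
  - apply posdef_of_minors; [nra |].
    replace ((d + 1) * k * ((a + 1) * k) - - b * k * (- b * k))
      with ((a * d - b * b - 1) * (k * k) + k * k * t) by (unfold t; ring).
    rewrite Hdet, k_sq. lra.
  - unfold mmul; simpl; f_equal.
    + transitivity (d * (k * k * t) + k * k * (1 - (a * d - b * b))); [unfold t; ring |].
      rewrite k_sq, Hdet; ring.
    + transitivity (- b * (k * k * t)); [unfold t; ring | rewrite k_sq; ring].
    + transitivity (- b * (k * k * t)); [unfold t; ring | rewrite k_sq; ring].
    + transitivity (a * (k * k * t) + k * k * (1 - (a * d - b * b))); [unfold t; ring |].
      rewrite k_sq, Hdet; ring.
Qed.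

Lemma congr_inv_sqrt S G : is_sym S -> det2 S = 1 -> det2 G = 1 ->
  mmul S S = minv G -> congr S G = Id2.
Proof.
  intros Hsym HdetS HdetG Hsq. rewrite (minv_det1 G HdetG) in Hsq.
  destruct S as [p q q' r]; unfold is_sym, det2 in *; simpl in *; subst q'.
  destruct G as [a b c d]; unfold mmul in Hsq; simpl in Hsq.
  injection Hsq as Ed Eb Ec Ea.
  assert (Hc : c = - (q * p + r * q)) by lra.
  assert (Hb : b = - (p * q + q * r)) by lra.
  unfold congr, mmul, mtr, Id2; simpl.
  rewrite <- Ea, <- Ed, Hb, Hc.
  replace 1 with ((p * r - q * q) * (p * r - q * q)) by (rewrite HdetS; ring).
  f_equal; ring.
Qed.

Lemma minv_sqrt_spec G : SLsymp G ->
  is_sym (minv_sqrt G) /\ det2 (minv_sqrt G) = 1 /\ congr (minv_sqrt G) G = Id2.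
Proof.
  intros HG.
  destruct (epsilon_spec (inhabits Id2) _ (inv_sqrt_exists G HG)) as [Hsym [Hpd Hsq]].
  fold (minv_sqrt G) in Hsym, Hpd, Hsq.
  destruct HG as [_ [_ HdetG]].
  assert (HdetS : det2 (minv_sqrt G) = 1).
  { pose proof (posdef_det _ Hsym Hpd) as Hpos.
    assert (Hsq_det : det2 (minv_sqrt G) * det2 (minv_sqrt G) = 1).
    { rewrite <- det_mmul, Hsq, (minv_det1 G HdetG), <- HdetG.
      unfold det2; simpl; ring. }
    nra. }
  split; [exact Hsym | split; [exact HdetS |]].
  apply congr_inv_sqrt; assumption.
Qed.

Definition rel_mat (G1 G2 : M2) : M2 :=
  mmul (minv_sqrt G1) (mmul G2 (minv_sqrt G1)).

Lemma rel_mat_spec G1 G2 : SLsymp G1 -> SLsymp G2 ->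
  rel_mat G1 G2 = congr (minv_sqrt G1) G2 /\
  is_sym (rel_mat G1 G2) /\ posdef (rel_mat G1 G2) /\ det2 (rel_mat G1 G2) = 1.
Proof.
  intros HG1 [Hsym2 [Hpd2 Hdet2]].
  destruct (minv_sqrt_spec G1 HG1) as [HsymS [HdetS _]].
  assert (Hcongr : rel_mat G1 G2 = congr (minv_sqrt G1) G2)
    by (unfold rel_mat, congr; rewrite (mtr_sym _ HsymS); reflexivity).
  rewrite Hcongr. repeat split.
  - apply congr_sym; exact Hsym2.
  - apply posdef_congr; [lra | exact Hpd2].
  - rewrite det_congr, HdetS, Hdet2; ring.
Qed.

(* Generalized Rayleigh bound: if v^T Q v = mu v^T P v > 0 with det P = 1,
   then mu <= lambda_max P * lambda_max Q (since lambda_min P = 1/lambda_max P). *)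
Lemma generalized_eigenvalue_bound P Q u1 u2 mu :
  is_sym P -> det2 P = 1 -> is_sym Q -> 0 < mu -> 0 < qf P u1 u2 ->
  qf Q u1 u2 = mu * qf P u1 u2 -> mu <= lambda_max P * lambda_max Q.
Proof.
  intros HsymP HdetP HsymQ Hmu HV HQ.
  rewrite !lambda_max_sym by assumption.
  pose proof (qf_le_lmax2 P u1 u2 HsymP) as HupP.
  pose proof (lmin2_le_qf P u1 u2 HsymP) as HlowP.
  pose proof (qf_le_lmax2 Q u1 u2 HsymQ) as HupQ.
  pose proof (lmin2_mul_lmax2 P HsymP) as Hprod. rewrite HdetP in Hprod.
  set (U := u1 * u1 + u2 * u2) in *.
  set (V := qf P u1 u2) in *.
  set (x := lmax2 P) in *. set (z := lmax2 Q) in *. set (l := lmin2 P) in *.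
  assert (HU : 0 <= U) by (unfold U; nra).
  assert (Hx : 0 < x) by nra.
  assert (HUV : U <= x * V).
  { replace U with (x * (l * U)) by (rewrite <- Rmult_assoc, (Rmult_comm x), Hprod; ring).
    apply Rmult_le_compat_l; lra. }
  assert (Hz : 0 < z) by nra.
  apply (Rmult_le_reg_r V); [exact HV |].
  rewrite <- HQ. apply (Rle_trans _ (z * U)); [exact HupQ |].
  rewrite (Rmult_comm x z), Rmult_assoc. apply Rmult_le_compat_l; lra.
Qed.

(* Test the bound above on u = B^{-1} G1^{-1/2} v, v a top eigenvector. *)
Lemma rel_mat_lower_bound G1 G2 B : SLsymp G1 -> SLsymp G2 -> det2 B = 1 ->
  lambda_max (rel_mat G1 G2) <= lambda_max (congr B G1) * lambda_max (congr B G2).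
Proof.
  intros HG1 HG2 HB.
  destruct (minv_sqrt_spec G1 HG1) as [_ [_ Hwhite]].
  destruct (rel_mat_spec G1 G2 HG1 HG2) as [HN [HsymN [HpdN _]]].
  pose proof HG1 as [Hsym1 _]. pose proof HG2 as [Hsym2 _].
  set (S := minv_sqrt G1) in *. set (N := rel_mat G1 G2) in *.
  pose proof (lambda_max_pos N HsymN HpdN) as Hmu.
  destruct (lmax2_eigenvalue N HsymN) as [v1 [v2 [Hv [Ev1 Ev2]]]].
  rewrite <- lambda_max_sym in Ev1, Ev2 by exact HsymN.
  set (mu := lambda_max N) in *.
  set (w1 := m11 S * v1 + m12 S * v2). set (w2 := m21 S * v1 + m22 S * v2).
  assert (Hw1 : qf G1 w1 w2 = v1 * v1 + v2 * v2).
  { unfold w1, w2. rewrite <- qf_congr, Hwhite. unfold qf, Id2; simpl; ring. }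
  assert (Hw2 : qf G2 w1 w2 = mu * (v1 * v1 + v2 * v2)).
  { unfold w1, w2. rewrite <- qf_congr, <- HN. apply qf_eigenvector; assumption. }
  apply (generalized_eigenvalue_bound _ _
           (m22 B * w1 - m12 B * w2) (- m21 B * w1 + m11 B * w2));
    try (apply congr_sym; assumption); try assumption.
  - rewrite det_congr, HB, (proj2 (proj2 HG1)); ring.
  - rewrite qf_congr_adj, Hw1 by exact HB. apply sum_sq_pos, Hv.
  - rewrite !qf_congr_adj, Hw1, Hw2 by exact HB. reflexivity.
Qed.

Lemma unit_eigenvector M l : eigenvalue M l -> exists c s, c * c + s * s = 1 /\
  m11 M * c + m12 M * s = l * c /\ m21 M * c + m22 M * s = l * s.
Proof.
  intros [x [y [Hxy [E1 E2]]]].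
  pose proof (sum_sq_pos x y Hxy) as Hpos.
  set (n := sqrt (x * x + y * y)).
  assert (Hn : 0 < n) by (apply sqrt_lt_R0; exact Hpos).
  assert (Hnn : n * n = x * x + y * y) by (apply sqrt_sqrt; lra).
  exists (x / n), (y / n). repeat split.
  - transitivity ((x * x + y * y) / (n * n)); [field; lra |]. rewrite Hnn. field. lra.
  - transitivity ((m11 M * x + m12 M * y) / n); [field; lra |]. rewrite E1. field. lra.
  - transitivity ((m21 M * x + m22 M * y) / n); [field; lra |]. rewrite E2. field. lra.
Qed.

Lemma rotation_diagonalizes N mu c s : is_sym N -> det2 N = 1 -> c * c + s * s = 1 ->
  m11 N * c + m12 N * s = mu * c -> m21 N * c + m22 N * s = mu * s -> mu <> 0 ->
  congr (mkM2 c (- s) s c) N = mkM2 mu 0 0 (1 / mu).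
Proof.
  destruct N as [a b b' d]; unfold is_sym, det2; simpl; intros <- Hdet Hunit E1 E2 Hmu.
  unfold congr, mmul, mtr; simpl. f_equal.
  - transitivity (c * (a * c + b * s) + s * (b * c + d * s)); [ring |].
    rewrite E1, E2. transitivity (mu * (c * c + s * s)); [ring | rewrite Hunit; ring].
  - transitivity (- s * (a * c + b * s) + c * (b * c + d * s)); [ring |].
    rewrite E1, E2. ring.
  - transitivity (- s * (a * c + b * s) + c * (b * c + d * s)); [ring |].
    rewrite E1, E2. ring.
  - assert (Hinv : mu * (a * s * s - 2 * b * s * c + d * c * c) = 1).
    { transitivity (a * s * (mu * s) - b * s * (mu * c) - b * c * (mu * s) + d * c * (mu * c));
        [ring |].
      rewrite <- E1, <- E2.
      transitivity ((a * d - b * b) * (c * c + s * s)); [ring | rewrite Hdet, Hunit; ring]. }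
    transitivity (a * s * s - 2 * b * s * c + d * c * c); [ring |].
    apply (Rmult_eq_reg_l mu); [| exact Hmu]. rewrite Hinv. field. exact Hmu.
Qed.

Lemma congr_rotation_id c s : c * c + s * s = 1 -> congr (mkM2 c (- s) s c) Id2 = Id2.
Proof.
  intros Hunit. unfold congr, mmul, mtr, Id2; simpl.
  f_equal; try ring; (transitivity (c * c + s * s); [ring | exact Hunit]).
Qed.

Lemma congr_diag d1 d2 a b :
  congr (mkM2 d1 0 0 d2) (mkM2 a 0 0 b) = mkM2 (d1 * a * d1) 0 0 (d2 * b * d2).
Proof. unfold congr, mmul, mtr; simpl. f_equal; ring. Qed.

(* Rescaling by diag(mu^{-1/4}, mu^{1/4}) balances I and diag(mu, 1/mu):
   both then have largest eigenvalue sqrt mu. *)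
Lemma balancing_scaling mu : 1 <= mu -> exists D, det2 D = 1 /\
  lambda_max (congr D Id2) = sqrt mu /\
  lambda_max (congr D (mkM2 mu 0 0 (1 / mu))) = sqrt mu.
Proof.
  intros Hmu.
  set (m := sqrt mu).
  assert (Hm : 1 <= m) by (unfold m; rewrite <- sqrt_1; apply sqrt_le_1_alt; exact Hmu).
  assert (Hmm : m * m = mu) by (apply sqrt_sqrt; lra).
  set (k := sqrt m).
  assert (Hk : 0 < k) by (apply sqrt_lt_R0; lra).
  assert (Hkk : k * k = m) by (apply sqrt_sqrt; lra).
  assert (Hinv_m : / m <= m).
  { apply (Rmult_le_reg_l m); [lra |]. rewrite Rinv_r by lra. nra. }
  exists (mkM2 (/ k) 0 0 k). unfold Id2.
  rewrite !congr_diag, !lambda_max_diag. repeat split.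
  - unfold det2; simpl. field. lra.
  - replace (/ k * 1 * / k) with (/ m) by (rewrite <- Hkk; field; lra).
    replace (k * 1 * k) with m by (rewrite <- Hkk; ring).
    apply Rmax_right, Hinv_m.
  - replace (/ k * mu * / k) with m by (rewrite <- Hmm, <- Hkk; field; lra).
    replace (k * (1 / mu) * k) with (/ m) by (rewrite <- Hmm, <- Hkk; field; lra).
    apply Rmax_left, Hinv_m.
Qed.

Lemma rel_mat_attained G1 G2 : SLsymp G1 -> SLsymp G2 -> exists B, det2 B = 1 /\
  lambda_max (congr B G1) = sqrt (lambda_max (rel_mat G1 G2)) /\
  lambda_max (congr B G2) = sqrt (lambda_max (rel_mat G1 G2)).
Proof.
  intros HG1 HG2.
  destruct (minv_sqrt_spec G1 HG1) as [_ [HdetS Hwhite]].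
  destruct (rel_mat_spec G1 G2 HG1 HG2) as [HN [HsymN [HpdN HdetN]]].
  pose proof (lambda_max_ge1 _ HsymN HpdN HdetN) as Hmu.
  destruct (unit_eigenvector (rel_mat G1 G2) (lmax2 (rel_mat G1 G2)))
    as [c [s [Hunit [E1 E2]]]]; [exact (lmax2_eigenvalue _ HsymN) |].
  rewrite <- lambda_max_sym in E1, E2 by exact HsymN.
  destruct (balancing_scaling _ Hmu) as [D [HdetD [HD1 HD2]]].
  set (R := mkM2 c (- s) s c).
  exists (mmul (minv_sqrt G1) (mmul R D)).
  rewrite !congr_comp, Hwhite, <- HN. unfold R.
  rewrite congr_rotation_id by exact Hunit.
  rewrite (rotation_diagonalizes _ (lambda_max (rel_mat G1 G2)) c s) by (assumption || lra).
  repeat split; [| assumption | assumption].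
  rewrite !det_mmul, HdetS, HdetD. unfold det2; simpl.
  transitivity (c * c + s * s); [ring | exact Hunit].
Qed.

Lemma lambda_max_congr_pos X G : det2 X = 1 -> SLsymp G -> 0 < lambda_max (congr X G).
Proof.
  intros HX [Hsym [Hpd _]].
  apply lambda_max_pos; [apply congr_sym, Hsym | apply posdef_congr; [lra | exact Hpd]].
Qed.

(* Elementary: if mu <= x z and nu <= y w with positive factors, then
   sqrt(mu nu) <= max(x y, z w), since (x y)(z w) = (x z)(y w). *)
Lemma sqrt_prod_le_Rmax mu nu x y z w : 0 < mu -> 0 < nu ->
  0 < x -> 0 < y -> 0 < z -> 0 < w -> mu <= x * z -> nu <= y * w ->
  sqrt (mu * nu) <= Rmax (x * y) (z * w).
Proof.
  intros Hmu Hnu Hx Hy Hz Hw Hxz Hyw.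
  set (M := Rmax (x * y) (z * w)).
  assert (Hxy : x * y <= M) by apply Rmax_l.
  assert (Hzw : z * w <= M) by apply Rmax_r.
  assert (Hprod : mu * nu <= (x * y) * (z * w)).
  { replace ((x * y) * (z * w)) with ((x * z) * (y * w)) by ring.
    apply Rmult_le_compat; lra. }
  assert (HMM : (x * y) * (z * w) <= M * M) by (apply Rmult_le_compat; nra).
  rewrite <- (sqrt_square M) by nra. apply sqrt_le_1_alt. lra.
Qed.

Theorem mainTheorem7 (G1 G2 H1 H2 : M2) :
  SLsymp G1 -> SLsymp G2 -> SLsymp H1 -> SLsymp H2 ->
  is_Kmin G1 G2 H1 H2
    (sqrt (lambda_max (mmul (minv_sqrt G1) (mmul G2 (minv_sqrt G1))) *
           lambda_max (mmul (minv_sqrt H1) (mmul H2 (minv_sqrt H1))))).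
Proof.
  intros HG1 HG2 HH1 HH2.
  fold (rel_mat G1 G2) (rel_mat H1 H2).
  destruct (rel_mat_spec G1 G2 HG1 HG2) as [_ [HsymG [HpdG HdetG]]].
  destruct (rel_mat_spec H1 H2 HH1 HH2) as [_ [HsymH [HpdH HdetH]]].
  pose proof (lambda_max_ge1 _ HsymG HpdG HdetG) as Hmu.
  pose proof (lambda_max_ge1 _ HsymH HpdH HdetH) as Hnu.
  split.
  - destruct (rel_mat_attained G1 G2 HG1 HG2) as [B [HB [EG1 EG2]]].
    destruct (rel_mat_attained H1 H2 HH1 HH2) as [A [HA [EH1 EH2]]].
    exists A, B. split; [exact HA | split; [exact HB |]].
    unfold Kobj; fold (congr B G1) (congr B G2) (congr A H1) (congr A H2).
    rewrite EG1, EG2, EH1, EH2, Rmax_left by lra.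
    symmetry. apply sqrt_mult; lra.
  - intros A B HA HB.
    unfold Kobj; fold (congr B G1) (congr B G2) (congr A H1) (congr A H2).
    apply sqrt_prod_le_Rmax; try lra;
      first [ apply lambda_max_congr_pos | apply rel_mat_lower_bound ]; assumption.
Qed.
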